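(* For every positive integer $s$, $$\sum_{n=1}^\infty\frac{(-1)^n}{n^s\,2^n\binom{2n}{n}}\in\mathsf{CMZV}^2_s.$$
   Context: For positive integers $s_1,\dots,s_k$ and complex $a_j$, $L_{s_1,\dots,s_k}(a_1,\dots,a_k)=\sum_{n_1>\cdots>n_k\ge1}\frac{a_1^{n_1}\cdots a_k^{n_k}}{n_1^{s_1}\cdots n_k^{s_k}}$. For integers $N\ge1$, $W\ge1$, $\mathsf{CMZV}^N_W$ is the $\mathbb{Q}$-linear span of all $L_{s_1,\dots,s_k}(a_1,\dots,a_k)$ with $k\ge1$, $s_1+\cdots+s_k=W$, each $a_j$ an $N$-th root of unity, and $(s_1,a_1)\ne(1,1)$. *)

From Stdlib Require Import Reals QArith Qreals List.
From Coquelicot Require Import Coquelicot.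
Open Scope R_scope.

(* Truncated multiple polylogarithm sum:
   msum [(s1,a1);...;(sk,ak)] M =
     sum_{M >= n1 > n2 > ... > nk >= 1} a1^n1 ... ak^nk / (n1^s1 ... nk^sk). *)
Fixpoint msum (l : list (nat * R)) (M : nat) : R :=
  match l with
  | nil => 1
  | (s, a) :: l' =>
      (fix g (m : nat) : R :=
         match m with
         | O => 0
         | S m' => g m' + a ^ (S m') / (INR (S m')) ^ s * msum l' m'
         end) M
  end.

(* Admissible index data for CMZV^2_W: k >= 1, all s_j >= 1, each a_j a
   2nd root of unity (a_j^2 = 1; these are real), weight W, and
   (s1,a1) <> (1,1). *)
Definition cmzv2_index (W : nat) (l : list (nat * R)) : Prop :=
  l <> nil /\
  List.Forall (fun p => (1 <= fst p)%nat /\ (snd p) ^ 2 = 1) l /\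
  fold_right (fun p acc => (fst p + acc)%nat) 0%nat l = W /\
  (match l with
   | (s1, a1) :: _ => ~ (s1 = 1%nat /\ a1 = 1)
   | nil => True
   end).

(* x lies in the Q-linear span CMZV^2_W: x is a finite Q-linear combination
   of values L_{s}(a) (each value being the limit of the truncated sums). *)
Definition in_CMZV2 (W : nat) (x : R) : Prop :=
  exists terms : list (Q * list (nat * R) * R),
    List.Forall (fun t => cmzv2_index W (snd (fst t)) /\
                     is_lim_seq (msum (snd (fst t))) (Finite (snd t))) terms /\
    x = fold_right (fun t acc => Q2R (fst (fst t)) * snd t + acc) 0 terms.

Definition thm_term (s n : nat) : R :=
  (-1) ^ n / ((INR n) ^ s * 2 ^ n * INR (Factorial.fact (2 * n)) / (INR (Factorial.fact n)) ^ 2).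

(* Let [F_s(z) = sum_(n >= 1) z^n / (n^s binom(2n, n))], so that the series is
   [F_s(-1/2)], and substitute [z(x) = -x^2 / (1 + x)]: then [z(1) = -1/2] and
   [z'/z = 2/x - 1/(1 + x)], so [d/dx F_(s+1)(z(x)) = (2/x - 1/(1 + x)) F_s(z(x))].
   The generating series [Li_w(x)] of the multiple polylogarithms, whose value at
   [x = 1] is [L_w], obey the matching rules [d/dx Li_((s+1,a)::v) = Li_((s,a)::v) / x]
   and [d/dx Li_((1,-1)::v)(x) = - Li_v(-x) / (1 + x)].  The ODE
   [(4 - z) F_0 = 2 F_1 + z] gives [F_1(z(x)) = x Li_((1,-1))(x) / (2 + x)], and
   induction on [s] then writes [F_s(z(x))] as an explicit rational combination of
   [Li_w(x)] with [w] admissible of weight [s].  Letting [x -> 1-] (Abel's theorem;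
   the coefficients of [Li_w] are summable for admissible [w], by a [sqrt n] bound on
   the truncated sums and, for the head [(1, -1)], summation by parts) expresses
   [F_s(-1/2)] as the same rational combination of the values [L_w]. *)

From Stdlib Require Import Reals QArith Qreals List Lra Lia.
From Coquelicot Require Import Coquelicot.
Open Scope R_scope.

(** * Series, derivatives and limits at [1-] *)

Lemma is_series_telescope (u : nat -> R) :
  is_lim_seq u 0 -> is_series (fun n => u n - u (S n)) (u O).
Proof.
  intros Hu.
  assert (Hpart : forall N, sum_n (fun n => u n - u (S n)) N = u O - u (S N)).
  { induction N as [|N IH]; [now rewrite sum_O|].
    rewrite sum_Sn, IH. simpl. unfold plus; simpl. ring. }
  enough (H : is_lim_seq (sum_n (fun n => u n - u (S n))) (u O)) by exact H.
  apply (is_lim_seq_ext (fun N => u O - u (S N))); [intros N; now rewrite Hpart|].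
  assert (H : is_lim_seq (fun N => u O - u (S N)) (u O - 0)).
  { apply is_lim_seq_minus'; [apply is_lim_seq_const|]. now apply is_lim_seq_incr_1 in Hu. }
  now rewrite Rminus_0_r in H.
Qed.

(* [(-1)^n b n] is the telescoping [u n - u (S n)] with [u n = (-1)^n b n / 2], plus the
   absolutely convergent [(-1)^n (b n - b (S n)) / 2]. *)
Lemma ex_series_alternating (b : nat -> R) :
  is_lim_seq b 0 -> ex_series (fun n => Rabs (b n - b (S n))) ->
  ex_series (fun n => (-1) ^ n * b n).
Proof.
  intros Hb Hvar.
  set (u := fun n => (-1) ^ n * b n / 2).
  assert (Hu : is_lim_seq u 0).
  { apply is_lim_seq_abs_0.
    apply (is_lim_seq_ext (fun n => / 2 * Rabs (b n))).
    - intros n. unfold u, Rdiv. rewrite !Rabs_mult, pow_1_abs, Rabs_inv, (Rabs_pos_eq 2) by lra. ring.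
    - replace (Finite 0) with (Rbar_mult (/ 2) 0) by (simpl; f_equal; ring).
      apply is_lim_seq_scal_l. now apply -> is_lim_seq_abs_0. }
  assert (Hrest : ex_series (fun n => (-1) ^ n * (b n - b (S n)) / 2)).
  { apply ex_series_Rabs.
    apply (ex_series_le (V := R_CompleteNormedModule) _ (fun n => Rabs (b n - b (S n)))); [|exact Hvar].
    intros n. change (Rabs (Rabs ((-1) ^ n * (b n - b (S n)) / 2)) <= Rabs (b n - b (S n))).
    unfold Rdiv. rewrite Rabs_Rabsolu, !Rabs_mult, pow_1_abs, Rabs_inv, (Rabs_pos_eq 2) by lra.
    pose proof (Rabs_pos (b n - b (S n))). lra. }
  destruct Hrest as [l Hl].
  exists (u O + l).
  eapply is_series_ext; [|apply (is_series_plus _ _ _ _ (is_series_telescope u Hu) Hl)].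
  intros n. unfold u. simpl. change plus with Rplus. field.
Qed.

Lemma is_lim_seq_inv_sqrt : is_lim_seq (fun n => / sqrt (INR n + 1)) 0.
Proof.
  assert (Hinv : is_lim_seq (fun n => / INR (S n)) 0).
  { apply (is_lim_seq_inv _ p_infty); [|discriminate].
    apply -> is_lim_seq_incr_1. apply is_lim_seq_INR. }
  apply (is_lim_seq_ext (fun n => sqrt (/ INR (S n)))).
  - intros n. now rewrite sqrt_inv, S_INR.
  - rewrite <- sqrt_0. apply (is_lim_seq_continuous sqrt); [|exact Hinv].
    apply continuity_pt_filterlim, continuous_sqrt.
Qed.

Lemma inv_pow32_le_telescope n :
  / ((INR n + 1) * sqrt (INR n + 1)) <= 8 * (/ sqrt (INR n + 1) - / sqrt (INR (S n) + 1)).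
Proof.
  rewrite S_INR. pose proof (pos_INR n).
  set (a := sqrt (INR n + 1)). set (b := sqrt (INR n + 1 + 1)).
  assert (Ha2 : a * a = INR n + 1) by (apply sqrt_sqrt; lra).
  assert (Hb2 : b * b = INR n + 1 + 1) by (apply sqrt_sqrt; lra).
  assert (Ha1 : 1 <= a) by (rewrite <- sqrt_1; apply sqrt_le_1_alt; lra).
  assert (Hb : 0 <= b) by apply sqrt_pos.
  assert (Hab : a <= b <= 2 * a) by nra.
  replace (/ a - / b) with ((b - a) / (a * b)) by (field; lra).
  assert (Hd : b - a = / (a + b)).
  { apply (Rmult_eq_reg_r (a + b)); [rewrite Rinv_l; nra | nra]. }
  rewrite Hd.
  rewrite <- Ha2.
  replace (8 * (/ (a + b) / (a * b))) with (/ (a * b * (a + b) / 8)) by (field; nra).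
  apply Rinv_le_contravar; nra.
Qed.

Lemma ex_series_inv_pow32 : ex_series (fun n => / ((INR n + 1) * sqrt (INR n + 1))).
Proof.
  set (t := fun n => / sqrt (INR n + 1)).
  apply (ex_series_le (V := R_CompleteNormedModule) _ (fun n => 8 * (t n - t (S n)))).
  - intros n. change (Rabs (/ ((INR n + 1) * sqrt (INR n + 1))) <= 8 * (t n - t (S n))).
    pose proof (pos_INR n). assert (0 < sqrt (INR n + 1)) by (apply sqrt_lt_R0; lra).
    rewrite Rabs_pos_eq by (apply Rlt_le, Rinv_0_lt_compat; nra).
    apply inv_pow32_le_telescope.
  - apply (ex_series_scal_l (V := R_NormedModule) 8 (fun n => t n - t (S n))).
    eexists. apply is_series_telescope, is_lim_seq_inv_sqrt.
Qed.

Lemma continuity_pt_of_ex_derive (f : R -> R) x : ex_derive f x -> continuity_pt f x.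
Proof.
  intros Hf. apply continuity_pt_filterlim.
  exact (ex_derive_continuous (K := R_AbsRing) (V := R_NormedModule) f x Hf).
Qed.

Lemma is_derive_eq (f : R -> R) (x a b : R) : is_derive f x a -> a = b -> is_derive f x b.
Proof. now intros Hf <-. Qed.

Lemma eq_on_01_of_is_derive (f g df : R -> R) :
  (forall x, 0 < x < 1 -> is_derive f x (df x)) ->
  (forall x, 0 < x < 1 -> is_derive g x (df x)) ->
  continuity_pt f 0 -> continuity_pt g 0 -> f 0 = g 0 ->
  forall x, 0 <= x < 1 -> f x = g x.
Proof.
  intros Hf Hg Cf Cg H0 y Hy.
  destruct (Req_dec y 0) as [->|Hy0]; [exact H0|].
  assert (Dfg : forall x, 0 < x < 1 -> is_derive (fun t => f t - g t) x 0).
  { intros x Hx. replace 0 with (df x - df x) by ring.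
    apply (is_derive_minus f g); auto. }
  destruct (MVT_gen (fun t => f t - g t) 0 y (fun _ => 0)) as [c [_ E]].
  - intros x Hx. rewrite Rmin_left, Rmax_right in Hx by lra. apply Dfg. lra.
  - intros x Hx. rewrite Rmin_left, Rmax_right in Hx by lra.
    destruct (Req_dec x 0) as [->|Hx0]; [now apply continuity_pt_minus|].
    apply continuity_pt_of_ex_derive. eexists. apply Dfg. lra.
  - lra.
Qed.

Lemma CV_radius_ge1_of_bounded (c : nat -> R) M :
  (forall n, Rabs (c n) <= M) -> Rbar_le 1 (CV_radius c).
Proof.
  intros Hc. apply CV_radius_bounded. exists M. intros n.
  rewrite pow1, Rmult_1_r. apply Hc.
Qed.

Lemma Rabs_lt_CV_radius (c : nat -> R) x :
  Rbar_le 1 (CV_radius c) -> Rabs x < 1 -> Rbar_lt (Rabs x) (CV_radius c).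
Proof. intros Hc Hx. exact (Rbar_lt_le_trans (Rabs x) 1 _ Hx Hc). Qed.

Definition left_lim1 (f : R -> R) (l : R) := filterlim f (at_left 1) (locally l).

Lemma left_lim1_const c : left_lim1 (fun _ => c) c.
Proof. apply filterlim_const. Qed.

Lemma left_lim1_plus f g a b :
  left_lim1 f a -> left_lim1 g b -> left_lim1 (fun x => f x + g x) (a + b).
Proof. intros Hf Hg. exact (filterlim_comp_2 f g Rplus Hf Hg (filterlim_plus a b)). Qed.

Lemma left_lim1_mult f g a b :
  left_lim1 f a -> left_lim1 g b -> left_lim1 (fun x => f x * g x) (a * b).
Proof. intros Hf Hg. exact (filterlim_comp_2 f g Rmult Hf Hg (filterlim_mult a b)). Qed.

Lemma left_lim1_continuous f : continuity_pt f 1 -> left_lim1 f (f 1).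
Proof.
  intros Hf. apply continuity_pt_filterlim in Hf.
  exact (filterlim_filter_le_1 _ (filter_le_within (F := locally 1) _) Hf).
Qed.

Lemma left_lim1_ext f g l : (forall x, 0 < x < 1 -> f x = g x) -> left_lim1 f l -> left_lim1 g l.
Proof.
  intros Efg Hf. apply (filterlim_ext_loc f g); [|exact Hf].
  exists (mkposreal (1 / 2) ltac:(lra)). intros y Hy Hy1.
  apply Efg. apply Rabs_def2 in Hy. simpl in Hy. change (minus y 1) with (y - 1) in Hy. lra.
Qed.

Lemma left_lim1_unique f a b : left_lim1 f a -> left_lim1 f b -> a = b.
Proof.
  apply (filterlim_locally_unique (V := R_NormedModule) (F := at_left 1)).
Qed.

(* Abel's theorem when the radius is exactly 1, continuity inside the disc otherwise. *)
Lemma left_lim1_PSeries (a : nat -> R) :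
  Rbar_le 1 (CV_radius a) -> ex_series a -> left_lim1 (PSeries a) (Series a).
Proof.
  intros Hr Ha. rewrite <- PSeries_1.
  destruct (Rbar_le_lt_or_eq_dec _ _ Hr) as [Hlt|Heq].
  - apply left_lim1_continuous, PSeries_continuity.
    now rewrite Rabs_R1.
  - unfold left_lim1. replace 1 with (real (CV_radius a)) by now rewrite <- Heq.
    apply Abel; rewrite <- Heq; [simpl; lra | easy | ].
    now apply ex_pseries_1.
Qed.

(** * Truncated multiple polylogarithm sums *)

Definition is_letter (p : nat * R) : Prop := (1 <= fst p)%nat /\ snd p ^ 2 = 1.

(* [Li_coef w] is the coefficient sequence of
   [Li_w(x) = sum_(n1 > ... > nk >= 1) a1^n1 ... ak^nk x^n1 / (n1^s1 ... nk^sk)], so that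
   [msum w] is its sequence of partial sums at [x = 1]; the empty word gives the constant [1]. *)
Definition Li_coef (w : list (nat * R)) (n : nat) : R :=
  match w with
  | nil => match n with O => 1 | S _ => 0 end
  | (s, a) :: v => match n with O => 0 | S m => a ^ S m / INR (S m) ^ s * msum v m end
  end.

Lemma msum_cons_S s a v M :
  msum ((s, a) :: v) (S M) = msum ((s, a) :: v) M + a ^ S M / INR (S M) ^ s * msum v M.
Proof. reflexivity. Qed.

Lemma Li_coef_cons_S s a v m : Li_coef ((s, a) :: v) (S m) = a ^ S m / INR (S m) ^ s * msum v m.
Proof. reflexivity. Qed.

Lemma msum_sum_f_R0 w M : msum w M = sum_f_R0 (Li_coef w) M.
Proof.
  destruct w as [|[s a] v].
  - induction M as [|M IH]; [reflexivity|]. simpl. rewrite <- IH. simpl. ring.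
  - induction M as [|M IH]; [reflexivity|]. now rewrite msum_cons_S, IH.
Qed.

Lemma Rabs_pow_sign a n : a ^ 2 = 1 -> Rabs (a ^ n) = 1.
Proof.
  intros Ha. rewrite <- RPow_abs.
  replace (Rabs a) with 1; [apply pow1|].
  assert (Rabs a * Rabs a = 1) by (rewrite <- Rabs_mult; simpl in Ha; rewrite Rmult_1_r in Ha;
    rewrite Ha; apply Rabs_R1).
  pose proof (Rabs_pos a). nra.
Qed.

Lemma Rabs_letter_term s a n : a ^ 2 = 1 -> Rabs (a ^ n / INR n ^ s) = / INR n ^ s.
Proof.
  intros Ha. unfold Rdiv.
  rewrite Rabs_mult, Rabs_pow_sign, Rabs_inv, Rabs_pos_eq by (auto; apply pow_le, pos_INR).
  ring.
Qed.

Lemma inv_pow_INR_S_le m k s : (k <= s)%nat -> / INR (S m) ^ s <= / INR (S m) ^ k.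
Proof.
  intros Hks. assert (1 <= INR (S m)) by (rewrite S_INR; pose proof (pos_INR m); lra).
  apply Rinv_le_contravar; [apply pow_lt; lra | now apply Rle_pow].
Qed.

Lemma sqrt_INR_S m : 1 <= sqrt (INR m + 1) /\ sqrt (INR m + 1) * sqrt (INR m + 1) = INR m + 1.
Proof.
  pose proof (pos_INR m). split.
  - rewrite <- sqrt_1 at 1. apply sqrt_le_1_alt. lra.
  - apply sqrt_sqrt. lra.
Qed.

Lemma two_sqrt_increment m : 2 * sqrt (INR m) + / sqrt (INR m + 1) <= 2 * sqrt (INR m + 1).
Proof.
  pose proof (pos_INR m).
  set (a := sqrt (INR m)). set (b := sqrt (INR m + 1)).
  assert (Ha : 0 <= a) by apply sqrt_pos.
  assert (Hb : 0 < b) by (apply sqrt_lt_R0; lra).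
  assert (Ha2 : a * a = INR m) by (apply sqrt_sqrt; lra).
  assert (Hb2 : b * b = INR m + 1) by (apply sqrt_sqrt; lra).
  replace (/ b) with (b / (b * b)) by (field; lra).
  rewrite Hb2. apply (Rmult_le_reg_r (INR m + 1)); [lra|].
  replace ((2 * a + b / (INR m + 1)) * (INR m + 1)) with (2 * a * (INR m + 1) + b) by (field; lra).
  assert (0 <= b * ((a - b) * (a - b))) by (apply Rmult_le_pos; [lra | apply Rle_0_sqr]).
  nra.
Qed.

(* Each letter costs at most a factor 2 over the previous bound, since
   [sum_(n <= m) sqrt n / n <= 2 sqrt m]. *)
Lemma Rabs_msum_le v m : List.Forall is_letter v ->
  Rabs (msum v m) <= 2 ^ length v * sqrt (INR m + 1).
Proof.
  revert m. induction v as [|[s a] v IH]; intros m Hv.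
  - simpl. rewrite Rabs_R1, Rmult_1_l, <- sqrt_1 at 1. apply sqrt_le_1_alt. pose proof (pos_INR m). lra.
  - inversion Hv as [|? ? [Hs Ha] Hv']; subst. simpl in Hs, Ha.
    set (K := 2 ^ length v). assert (HK : 0 <= K) by (apply pow_le; lra).
    assert (Hhead : forall m, Rabs (msum ((s, a) :: v) m) <= K * (2 * sqrt (INR m))).
    { induction m0 as [|m0 IHm].
      - simpl. rewrite Rabs_R0, sqrt_0. lra.
      - rewrite msum_cons_S. eapply Rle_trans; [apply Rabs_triang|].
        rewrite Rabs_mult, Rabs_letter_term by exact Ha.
        destruct (sqrt_INR_S m0) as [Hr1 Hr2].
        assert (Hterm : / INR (S m0) ^ s * Rabs (msum v m0) <= K * / sqrt (INR m0 + 1)).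
        { eapply Rle_trans.
          - apply Rmult_le_compat;
              [ | apply Rabs_pos | apply (inv_pow_INR_S_le m0 1 s Hs) | apply IH, Hv'].
            apply Rlt_le, Rinv_0_lt_compat, pow_lt, lt_0_INR. lia.
          - rewrite S_INR. set (r := sqrt (INR m0 + 1)) in *. rewrite <- Hr2.
            right. unfold K. field. lra. }
        assert (K * (2 * sqrt (INR m0)) + K * / sqrt (INR m0 + 1) <= K * (2 * sqrt (INR (S m0)))).
        { rewrite S_INR, <- Rmult_plus_distr_l. apply Rmult_le_compat_l; [exact HK|].
          apply two_sqrt_increment. }
        lra. }
    change (2 ^ length ((s, a) :: v)) with (2 * K). eapply Rle_trans; [apply Hhead|].
    assert (sqrt (INR m) <= sqrt (INR m + 1)) by (apply sqrt_le_1_alt; lra).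
    nra.
Qed.

Lemma Rabs_Li_coef_S_le s a v m k : (k <= s)%nat -> is_letter (s, a) -> List.Forall is_letter v ->
  Rabs (Li_coef ((s, a) :: v) (S m)) <= 2 ^ length v * sqrt (INR m + 1) / INR (S m) ^ k.
Proof.
  intros Hks [_ Ha] Hv. rewrite Li_coef_cons_S, Rabs_mult, Rabs_letter_term by exact Ha.
  pose proof (Rabs_msum_le v m Hv). pose proof (inv_pow_INR_S_le m k s Hks).
  assert (0 < / INR (S m) ^ s) by (apply Rinv_0_lt_compat, pow_lt, lt_0_INR; lia).
  unfold Rdiv. rewrite (Rmult_comm _ (/ _)).
  apply Rmult_le_compat; auto using Rlt_le, Rabs_pos.
Qed.

Lemma Rabs_Li_coef_S_le_inv_sqrt s a v m : is_letter (s, a) -> List.Forall is_letter v ->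
  Rabs (Li_coef ((s, a) :: v) (S m)) <= 2 ^ length v / sqrt (INR m + 1).
Proof.
  intros Hl Hv. destruct (sqrt_INR_S m) as [Hr1 Hr2].
  eapply Rle_trans; [apply (Rabs_Li_coef_S_le s a v m 1); auto; apply Hl|].
  rewrite S_INR. set (r := sqrt (INR m + 1)) in *. rewrite <- Hr2. right. field. lra.
Qed.

Lemma CV_radius_Li_coef w : List.Forall is_letter w -> Rbar_le 1 (CV_radius (Li_coef w)).
Proof.
  intros Hw. apply (CV_radius_ge1_of_bounded _ (2 ^ length w)).
  destruct w as [|[s a] v]; intros [|m]; simpl Li_coef; rewrite ?Rabs_R0, ?Rabs_R1.
  - simpl; lra.
  - apply pow_le; lra.
  - apply pow_le; lra.
  - inversion Hw as [|? ? Hl Hv]; subst.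
    eapply Rle_trans; [now apply Rabs_Li_coef_S_le_inv_sqrt|].
    destruct (sqrt_INR_S m) as [Hr1 _].
    assert (0 < 2 ^ length v) by (apply pow_lt; lra).
    simpl length. rewrite <- tech_pow_Rmult. unfold Rdiv.
    assert (/ sqrt (INR m + 1) <= 1) by (rewrite <- Rinv_1 at 2; apply Rinv_le_contravar; lra).
    nra.
Qed.

Lemma ex_series_Li_coef_head_ge2 s a v :
  (2 <= s)%nat -> is_letter (s, a) -> List.Forall is_letter v ->
  ex_series (Li_coef ((s, a) :: v)).
Proof.
  intros Hs Hl Hv. apply ex_series_incr_1, ex_series_Rabs.
  apply (ex_series_le (V := R_CompleteNormedModule) _
           (fun m => 2 ^ length v * / ((INR m + 1) * sqrt (INR m + 1)))).
  - intros m. change (Rabs (Rabs (Li_coef ((s, a) :: v) (S m)))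
                      <= 2 ^ length v * / ((INR m + 1) * sqrt (INR m + 1))).
    rewrite Rabs_Rabsolu. destruct (sqrt_INR_S m) as [Hr1 Hr2].
    eapply Rle_trans; [now apply (Rabs_Li_coef_S_le s a v m 2)|].
    rewrite S_INR. set (r := sqrt (INR m + 1)) in *. rewrite <- Hr2. right. field. lra.
  - apply (ex_series_scal_l (V := R_NormedModule) (2 ^ length v)), ex_series_inv_pow32.
Qed.

Lemma Rabs_msum_S_sub_le v m : List.Forall is_letter v ->
  Rabs (msum v (S m) - msum v m) <= 2 ^ length v / sqrt (INR m + 1).
Proof.
  intros Hv. destruct (sqrt_INR_S m) as [Hr1 _].
  assert (0 < 2 ^ length v / sqrt (INR m + 1)) by (apply Rdiv_lt_0_compat; [apply pow_lt|]; lra).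
  rewrite !msum_sum_f_R0. simpl sum_f_R0 at 1. replace (_ + _ - _) with (Li_coef v (S m)) by ring.
  destruct v as [|[s a] v'].
  - change (Li_coef nil (S m)) with 0. rewrite Rabs_R0. lra.
  - inversion Hv as [|? ? Hl Hv']; subst.
    eapply Rle_trans; [now apply Rabs_Li_coef_S_le_inv_sqrt|].
    simpl length. rewrite <- tech_pow_Rmult. unfold Rdiv.
    assert (0 < 2 ^ length v' * / sqrt (INR m + 1)).
    { apply Rmult_lt_0_compat; [apply pow_lt | apply Rinv_0_lt_compat]; lra. }
    lra.
Qed.

Lemma Rabs_sub_div_sq_le (A D K r : R) : 1 <= r -> 0 <= K -> Rabs A <= K * r -> Rabs D <= K / r ->
  Rabs (A / (r * r) - (A + D) / (r * r + 1)) <= 2 * K / (r * r * r).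
Proof.
  intros Hr HK HA HD.
  assert (Hr2 : 0 < r * r + 1) by nra. assert (Hr3 : 0 < r * r * (r * r + 1)) by nra.
  replace (A / (r * r) - (A + D) / (r * r + 1)) with (A / (r * r * (r * r + 1)) - D / (r * r + 1))
    by (field; lra).
  eapply Rle_trans; [apply Rabs_triang|]. rewrite Rabs_Ropp. unfold Rdiv.
  rewrite !Rabs_mult, !Rabs_inv, !(Rabs_pos_eq (_ + 1)), (Rabs_pos_eq (r * r * _)) by lra.
  apply (Rle_trans _ (K * r * / (r * r * (r * r + 1)) + K / r * / (r * r + 1))).
  - apply Rplus_le_compat; apply Rmult_le_compat_r; auto using Rlt_le, Rinv_0_lt_compat.
  - replace (K * r * / (r * r * (r * r + 1)) + K / r * / (r * r + 1))
      with (2 * K / (r * (r * r + 1)))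
      by (field; lra).
    unfold Rdiv. apply Rmult_le_compat_l; [lra|]. apply Rinv_le_contravar; nra.
Qed.

Lemma Rabs_msum_div_le v m : List.Forall is_letter v ->
  Rabs (msum v m / INR (S m)) <= 2 ^ length v / sqrt (INR m + 1).
Proof.
  intros Hv. destruct (sqrt_INR_S m) as [Hr1 Hr2].
  pose proof (Rabs_msum_le v m Hv) as HA.
  rewrite S_INR. set (r := sqrt (INR m + 1)) in *. rewrite <- Hr2 in *.
  unfold Rdiv. rewrite Rabs_mult, Rabs_inv, (Rabs_pos_eq (_ * _)) by nra.
  apply (Rle_trans _ (2 ^ length v * r * / (r * r))).
  - apply Rmult_le_compat_r; [left; apply Rinv_0_lt_compat; nra | exact HA].
  - right. field. lra.
Qed.

Lemma Rabs_msum_div_sub_le v m : List.Forall is_letter v ->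
  Rabs (msum v m / INR (S m) - msum v (S m) / INR (S (S m)))
  <= 2 * 2 ^ length v / ((INR m + 1) * sqrt (INR m + 1)).
Proof.
  intros Hv. destruct (sqrt_INR_S m) as [Hr1 Hr2].
  pose proof (Rabs_msum_le v m Hv) as HA. pose proof (Rabs_msum_S_sub_le v m Hv) as HD.
  rewrite !S_INR. set (r := sqrt (INR m + 1)) in *. rewrite <- Hr2.
  set (A := msum v m) in *. set (D := msum v (S m) - A) in HD.
  replace (msum v (S m)) with (A + D) by (unfold D; ring).
  eapply Rle_trans; [apply (Rabs_sub_div_sq_le A D (2 ^ length v) r); auto; apply pow_le; lra|].
  right. reflexivity.
Qed.

Lemma ex_series_Li_coef_alternating v : List.Forall is_letter v ->
  ex_series (Li_coef ((1%nat, -1) :: v)).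
Proof.
  intros Hv. set (K := 2 ^ length v).
  set (b := fun m => msum v m / INR (S m)).
  apply ex_series_incr_1, (ex_series_ext (fun m => - ((-1) ^ m * b m))).
  { intros m. change (- ((-1) ^ m * b m) = Li_coef ((1%nat, -1) :: v) (S m) :> R).
    rewrite Li_coef_cons_S, pow_1, <- tech_pow_Rmult. unfold b. field. apply not_0_INR. lia. }
  apply (ex_series_opp (V := R_NormedModule) (fun m => (-1) ^ m * b m)), ex_series_alternating.
  - apply is_lim_seq_abs_0, (is_lim_seq_le_le (fun _ => 0) _ (fun m => K * / sqrt (INR m + 1))).
    + intros m. split; [apply Rabs_pos | apply Rabs_msum_div_le, Hv].
    + apply is_lim_seq_const.
    + replace (Finite 0) with (Rbar_mult K 0) by (simpl; f_equal; ring).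
      apply is_lim_seq_scal_l, is_lim_seq_inv_sqrt.
  - apply (ex_series_le (V := R_CompleteNormedModule) _
             (fun m => 2 * K * / ((INR m + 1) * sqrt (INR m + 1)))).
    + intros m. change (Rabs (Rabs (b m - b (S m))) <= 2 * K * / ((INR m + 1) * sqrt (INR m + 1))).
      rewrite Rabs_Rabsolu. apply Rabs_msum_div_sub_le, Hv.
    + apply (ex_series_scal_l (V := R_NormedModule) (2 * K)), ex_series_inv_pow32.
Qed.

Lemma ex_series_Li_coef W w : cmzv2_index W w -> ex_series (Li_coef w).
Proof.
  intros (Hnil & Hw & _ & Hhead). destruct w as [|[s a] v]; [congruence|].
  inversion Hw as [|? ? Hl Hv]; subst. destruct Hl as [Hs Ha]; simpl in Hs, Ha.
  destruct (Nat.le_gt_cases 2 s) as [Hs2|Hs1].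
  - now apply ex_series_Li_coef_head_ge2; [|split|].
  - assert (s = 1%nat) as -> by lia.
    assert (Ha1 : a <> 1) by (intros ->; now apply Hhead).
    assert (a = -1) as ->.
    { assert (Hfac : (a - 1) * (a + 1) = 0) by nra.
      destruct (Rmult_integral _ _ Hfac); [exfalso; apply Ha1|]; lra. }
    now apply ex_series_Li_coef_alternating.
Qed.

Lemma is_lim_seq_msum W w : cmzv2_index W w -> is_lim_seq (msum w) (Series (Li_coef w)).
Proof.
  intros Hw. apply (is_lim_seq_ext (sum_n (Li_coef w))).
  - intros n. now rewrite sum_n_Reals, msum_sum_f_R0.
  - exact (Series_correct _ (ex_series_Li_coef W w Hw)).
Qed.

(** * Generating series of multiple polylogarithms *)

Lemma Rabs_lt_CV_radius_Li_coef w x : List.Forall is_letter w -> Rabs x < 1 ->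
  Rbar_lt (Rabs x) (CV_radius (Li_coef w)).
Proof. intros Hw. apply Rabs_lt_CV_radius, CV_radius_Li_coef, Hw. Qed.

Definition Li (w : list (nat * R)) (x : R) : R := PSeries (Li_coef w) x.

Definition incr_head (w : list (nat * R)) : list (nat * R) :=
  match w with nil => nil | (s, a) :: v => (S s, a) :: v end.

Definition neg_head (w : list (nat * R)) : list (nat * R) :=
  match w with nil => nil | (s, a) :: v => (s, - a) :: v end.

Lemma neg_head_involutive w : neg_head (neg_head w) = w.
Proof. destruct w as [|[s a] v]; simpl; now rewrite ?Ropp_involutive. Qed.

Lemma Forall_letter_incr_head w : List.Forall is_letter w -> List.Forall is_letter (incr_head w).
Proof.
  intros Hw. destruct w as [|[s a] v]; [constructor|].
  inversion Hw as [|? ? [Hs Ha] Hv]; subst. constructor; [|exact Hv].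
  split; simpl in *; [lia | exact Ha].
Qed.

Lemma Forall_letter_neg_head w : List.Forall is_letter w -> List.Forall is_letter (neg_head w).
Proof.
  intros Hw. destruct w as [|[s a] v]; [constructor|].
  inversion Hw as [|? ? [Hs Ha] Hv]; subst. constructor; [|exact Hv].
  split; simpl in *; [exact Hs | nra].
Qed.

Lemma Li_coef_neg_head w n : Li_coef (neg_head w) n = (-1) ^ n * Li_coef w n.
Proof.
  destruct w as [|[s a] v], n as [|m]; simpl neg_head; try (simpl; ring).
  rewrite !Li_coef_cons_S. replace (- a) with (-1 * a) by ring.
  rewrite Rpow_mult_distr. unfold Rdiv. ring.
Qed.

Lemma Li_0 w : w <> nil -> Li w 0 = 0.
Proof. intros Hw. unfold Li. rewrite PSeries_0. now destruct w as [|[s a] v]. Qed.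

Lemma Li_nil x : Rabs x < 1 -> Li nil x = 1.
Proof.
  intros Hx. unfold Li. rewrite PSeries_decr_1.
  - rewrite (PSeries_ext _ (fun _ => 0)), PSeries_const_0 by reflexivity. simpl. ring.
  - apply CV_radius_inside, Rabs_lt_CV_radius_Li_coef; [constructor | exact Hx].
Qed.

Lemma is_derive_Li_incr_head s a v x :
  List.Forall is_letter ((s, a) :: v) -> x <> 0 -> Rabs x < 1 ->
  is_derive (Li ((S s, a) :: v)) x (Li ((s, a) :: v) x / x).
Proof.
  intros Hw Hx0 Hx.
  assert (Hw' : List.Forall is_letter ((S s, a) :: v)) by apply (Forall_letter_incr_head _ Hw).
  unfold Li. replace (PSeries (Li_coef ((s, a) :: v)) x / x)
    with (PSeries (PS_derive (Li_coef ((S s, a) :: v))) x).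
  { now apply is_derive_PSeries, Rabs_lt_CV_radius_Li_coef. }
  rewrite (PSeries_decr_1 (Li_coef ((s, a) :: v)))
    by now apply CV_radius_inside, Rabs_lt_CV_radius_Li_coef.
  change (Li_coef ((s, a) :: v) 0%nat) with 0.
  replace ((0 + x * PSeries (PS_decr_1 (Li_coef ((s, a) :: v))) x) / x)
    with (PSeries (PS_decr_1 (Li_coef ((s, a) :: v))) x) by (field; auto).
  apply PSeries_ext. intros n. unfold PS_derive, PS_decr_1. rewrite !Li_coef_cons_S.
  rewrite <- (tech_pow_Rmult (INR (S n)) s). assert (INR (S n) <> 0) by (apply not_0_INR; lia).
  field. split; [apply pow_nonzero|]; auto.
Qed.

Lemma PS_derive_Li_coef_alternating u n :
  PS_derive (Li_coef ((1%nat, -1) :: u)) n = (-1) ^ S n * msum u n.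
Proof.
  unfold PS_derive. rewrite Li_coef_cons_S, pow_1. field. apply not_0_INR. lia.
Qed.

(* Coefficientwise form of [(1 + x) Li_((1,-1)::u)'(x) = - Li_(neg_head u)(x)]. *)
Lemma PS_derive_Li_coef_alternating_rec u n :
  @eq R (PS_plus (PS_derive (Li_coef ((1%nat, -1) :: u)))
                 (PS_incr_1 (PS_derive (Li_coef ((1%nat, -1) :: u)))) n)
        (- Li_coef (neg_head u) n).
Proof.
  unfold PS_plus, PS_incr_1. rewrite Li_coef_neg_head.
  change plus with Rplus.
  destruct n as [|m]; rewrite !PS_derive_Li_coef_alternating, !msum_sum_f_R0.
  - simpl. change zero with 0. ring.
  - rewrite tech5, <- !tech_pow_Rmult. ring.
Qed.

Lemma is_derive_Li_alternating u x : List.Forall is_letter u -> Rabs x < 1 ->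
  is_derive (Li ((1%nat, -1) :: u)) x (- Li (neg_head u) x / (1 + x)).
Proof.
  intros Hu Hx.
  assert (Hw : List.Forall is_letter ((1%nat, -1) :: u))
    by (constructor; [split; simpl; [lia | ring] | exact Hu]).
  set (d := PS_derive (Li_coef ((1%nat, -1) :: u))).
  assert (Hd : Rbar_lt (Rabs x) (CV_radius d)).
  { unfold d. rewrite CV_radius_derive. now apply Rabs_lt_CV_radius_Li_coef. }
  assert (Hsum : (1 + x) * PSeries d x = - Li (neg_head u) x).
  { unfold Li. rewrite <- PSeries_opp.
    rewrite <- (PSeries_ext _ _ _ (PS_derive_Li_coef_alternating_rec u)).
    rewrite PSeries_plus, PSeries_incr_1.
    - unfold d. ring.
    - now apply CV_radius_inside.
    - now apply ex_pseries_incr_1, CV_radius_inside. }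
  replace (- Li (neg_head u) x / (1 + x)) with (PSeries d x).
  - apply is_derive_PSeries. now apply Rabs_lt_CV_radius_Li_coef.
  - apply Rabs_def2 in Hx. rewrite <- Hsum. field. lra.
Qed.

(** * The inverse central binomial series *)

Definition binv_coef (s n : nat) : R :=
  match n with
  | O => 0
  | S m => INR (Factorial.fact (S m)) ^ 2 / (INR (S m) ^ s * INR (Factorial.fact (2 * S m)))
  end.

Definition Fbinv (s : nat) (z : R) : R := PSeries (binv_coef s) z.

Lemma fact_double_S n :
  Factorial.fact (2 * S n) = (S (S (2 * n)) * (S (2 * n) * Factorial.fact (2 * n)))%nat.
Proof. now replace (2 * S n)%nat with (S (S (2 * n))) by lia. Qed.

Lemma fact_sq_le n : (Factorial.fact n * Factorial.fact n <= Factorial.fact (2 * n))%nat.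
Proof.
  induction n as [|n IH]; [simpl; lia|].
  rewrite fact_double_S. change (Factorial.fact (S n)) with (S n * Factorial.fact n)%nat.
  nia.
Qed.

Lemma Rabs_binv_coef_le s n : Rabs (binv_coef s n) <= 1.
Proof.
  destruct n as [|m]; [simpl; rewrite Rabs_R0; lra|]. unfold binv_coef.
  assert (H1 : 1 <= INR (S m) ^ s) by (apply pow_R1_Rle; rewrite S_INR; pose proof (pos_INR m); lra).
  assert (H2 : INR (Factorial.fact (S m)) ^ 2 <= INR (Factorial.fact (2 * S m))).
  { replace (INR (Factorial.fact (S m)) ^ 2) with (INR (Factorial.fact (S m) * Factorial.fact (S m)))
      by (rewrite mult_INR; ring).
    apply le_INR, fact_sq_le. }
  pose proof (INR_fact_lt_0 (2 * S m)).
  set (D := INR (S m) ^ s * INR (Factorial.fact (2 * S m))).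
  assert (HD : INR (Factorial.fact (2 * S m)) <= D) by (unfold D; nra).
  rewrite Rabs_pos_eq by (apply Rdiv_le_0_compat; [apply pow_le, pos_INR | nra]).
  apply (Rmult_le_reg_r D); [nra|]. unfold Rdiv. rewrite Rmult_assoc, Rinv_l by nra. lra.
Qed.

Lemma CV_radius_binv_coef s : Rbar_le 1 (CV_radius (binv_coef s)).
Proof. apply (CV_radius_ge1_of_bounded _ 1), Rabs_binv_coef_le. Qed.

Lemma ex_pseries_binv_coef s z : Rabs z < 1 -> ex_pseries (binv_coef s) z.
Proof.
  intros Hz. apply CV_radius_inside, Rabs_lt_CV_radius; [apply CV_radius_binv_coef | exact Hz].
Qed.

Lemma INR_fact_double_S n :
  INR (Factorial.fact (2 * S n)) = (2 * INR n + 2) * (2 * INR n + 1) * INR (Factorial.fact (2 * n)).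
Proof.
  rewrite fact_double_S, !mult_INR, !S_INR, mult_INR. change (INR 2) with (1 + 1). ring.
Qed.

(* The ratio [c_(n+1) / c_n = (n+1) / (2 (2n+1))] of the central binomial
   series gives [(4 - z) F_0 = 2 F_1 + z] coefficientwise. *)
Lemma binv_coef_rec n :
  4 * binv_coef 0 n - PS_incr_1 (binv_coef 0) n - 2 * binv_coef 1 n = PS_incr_1 (Li_coef nil) n.
Proof.
  destruct n as [|[|k]]; [simpl; change zero with 0; ring | simpl; field |].
  change (PS_incr_1 (binv_coef 0) (S (S k))) with (binv_coef 0 (S k)).
  change (PS_incr_1 (Li_coef nil) (S (S k))) with 0.
  unfold binv_coef. rewrite !INR_fact_double_S.
  change (Factorial.fact (S (S k))) with (S (S k) * Factorial.fact (S k))%nat.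
  rewrite mult_INR, !S_INR. pose proof (pos_INR k).
  pose proof (INR_fact_neq_0 (S k)). pose proof (INR_fact_neq_0 (2 * k)).
  field. repeat split; lra.
Qed.

Lemma Fbinv_ode z : Rabs z < 1 -> (4 - z) * Fbinv 0 z = 2 * Fbinv 1 z + z.
Proof.
  intros Hz.
  assert (E0 := ex_pseries_binv_coef 0 z Hz). assert (E1 := ex_pseries_binv_coef 1 z Hz).
  assert (Hrec : PSeries (PS_minus (PS_minus (PS_scal 4 (binv_coef 0)) (PS_incr_1 (binv_coef 0)))
                                   (PS_scal 2 (binv_coef 1))) z = z).
  { rewrite (PSeries_ext _ (PS_incr_1 (Li_coef nil))) by apply binv_coef_rec.
    rewrite PSeries_incr_1. change (PSeries (Li_coef nil) z) with (Li nil z).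
    rewrite Li_nil by exact Hz. ring. }
  rewrite PSeries_minus, PSeries_minus, !PSeries_scal, PSeries_incr_1 in Hrec.
  - unfold Fbinv. lra.
  - apply ex_pseries_scal; [apply Rmult_comm | assumption].
  - now apply ex_pseries_incr_1.
  - apply ex_pseries_minus; [|now apply ex_pseries_incr_1].
    apply ex_pseries_scal; [apply Rmult_comm | assumption].
  - apply ex_pseries_scal; [apply Rmult_comm | assumption].
Qed.

Lemma Fbinv_eq_mul_decr s z : Rabs z < 1 -> Fbinv s z = z * PSeries (PS_decr_1 (binv_coef s)) z.
Proof.
  intros Hz. unfold Fbinv. rewrite PSeries_decr_1 by now apply ex_pseries_binv_coef.
  simpl. ring.
Qed.

Lemma is_derive_Fbinv_S s z : Rabs z < 1 -> z <> 0 -> is_derive (Fbinv (S s)) z (Fbinv s z / z).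
Proof.
  intros Hz Hz0.
  replace (Fbinv s z / z) with (PSeries (PS_derive (binv_coef (S s))) z).
  - apply is_derive_PSeries, Rabs_lt_CV_radius; [apply CV_radius_binv_coef | exact Hz].
  - rewrite Fbinv_eq_mul_decr by exact Hz.
    replace (z * _ / z) with (PSeries (PS_decr_1 (binv_coef s)) z) by (field; exact Hz0).
    apply PSeries_ext. intros n. unfold PS_derive, PS_decr_1, binv_coef.
    rewrite <- (tech_pow_Rmult (INR (S n)) s).
    assert (Hn : INR (S n) <> 0) by (apply not_0_INR; lia).
    pose proof (INR_fact_neq_0 (2 * S n)). pose proof (pow_nonzero (INR (S n)) s Hn).
    field. auto.
Qed.

Lemma ex_derive_Fbinv s z : Rabs z < 1 -> ex_derive (Fbinv s) z.
Proof.
  intros Hz. eexists.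
  apply is_derive_PSeries, Rabs_lt_CV_radius; [apply CV_radius_binv_coef | exact Hz].
Qed.

Definition zsub (x : R) : R := - (x * x) / (1 + x).

Lemma Rabs_zsub_lt1 x : 0 <= x <= 1 -> Rabs (zsub x) < 1.
Proof.
  intros Hx. unfold zsub. rewrite Rabs_left1.
  - apply (Rmult_lt_reg_r (1 + x)); [lra|].
    replace (- (- (x * x) / (1 + x)) * (1 + x)) with (x * x) by (field; lra). nra.
  - unfold Rdiv. apply Rmult_le_0_r; [nra | apply Rlt_le, Rinv_0_lt_compat; lra].
Qed.

Lemma is_derive_zsub x : 0 <= x -> is_derive zsub x (- (x * (2 + x)) / ((1 + x) * (1 + x))).
Proof. intros Hx. unfold zsub. auto_derive; [lra|]. field. lra. Qed.

Lemma is_derive_Fbinv_zsub s x : 0 < x <= 1 ->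
  is_derive (fun y => Fbinv (S s) (zsub y)) x ((2 + x) / (x * (1 + x)) * Fbinv s (zsub x)).
Proof.
  intros Hx. assert (Hz := Rabs_zsub_lt1 x ltac:(lra)).
  assert (Hz0 : zsub x <> 0).
  { intros E. assert (zsub x * (1 + x) = - (x * x)) by (unfold zsub; field; lra). nra. }
  eapply is_derive_eq.
  - apply (is_derive_comp (Fbinv (S s)) zsub);
      [now apply is_derive_Fbinv_S | apply is_derive_zsub; lra].
  - change scal with Rmult. unfold zsub. field. lra.
Qed.

Lemma ex_derive_Fbinv_zsub s x : 0 <= x <= 1 -> ex_derive (fun y => Fbinv s (zsub y)) x.
Proof.
  intros Hx. apply (ex_derive_comp (Fbinv s) zsub).
  - now apply ex_derive_Fbinv, Rabs_zsub_lt1.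
  - eexists. apply is_derive_zsub. lra.
Qed.

(** * Weight one *)

Definition Li1 : R -> R := Li ((1%nat, -1) :: nil).

Lemma is_derive_Li1 x : Rabs x < 1 -> is_derive Li1 x (- 1 / (1 + x)).
Proof.
  intros Hx. eapply is_derive_eq; [apply (is_derive_Li_alternating nil); [constructor | exact Hx]|].
  simpl neg_head. now rewrite Li_nil.
Qed.

(* The ODE [(4 - z) F_0 = 2 F_1 + z] turns [F_1(zsub x) (2 + x) / x] into a
   primitive of [-1 / (1 + x)], like [Li1]. *)
Lemma is_derive_Fbinv1_zsub_div x : 0 < x < 1 ->
  is_derive (fun y => Fbinv 1 (zsub y) * ((2 + y) / y)) x (- 1 / (1 + x)).
Proof.
  intros Hx.
  assert (Hq : is_derive (fun y => (2 + y) / y) x (- 2 / (x * x)))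
    by (auto_derive; [lra | field; lra]).
  assert (Hode := Fbinv_ode (zsub x) (Rabs_zsub_lt1 x ltac:(lra))).
  assert (H4z : 4 - zsub x = (2 + x) * (2 + x) / (1 + x)) by (unfold zsub; field; lra).
  assert (HF0 : Fbinv 0 (zsub x) = (2 * Fbinv 1 (zsub x) + zsub x) * (1 + x) / ((2 + x) * (2 + x))).
  { rewrite <- Hode, H4z. field. lra. }
  eapply is_derive_eq.
  - apply (is_derive_mult (fun y => Fbinv 1 (zsub y)) (fun y => (2 + y) / y));
      [apply (is_derive_Fbinv_zsub 0); lra | exact Hq | intros; apply Rmult_comm].
  - change plus with Rplus. change mult with Rmult. rewrite HF0. unfold zsub. field. lra.
Qed.

Lemma Fbinv1_zsub x : 0 < x < 1 -> Fbinv 1 (zsub x) = x * Li1 x / (2 + x).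
Proof.
  set (G := PSeries (PS_decr_1 (binv_coef 1))).
  (* [h] extends [Fbinv 1 (zsub y) * ((2 + y) / y)] continuously to [y = 0]. *)
  set (h := fun y => - (y * (2 + y)) / (1 + y) * G (zsub y)).
  assert (Hh : forall y, 0 < y < 1 -> h y = Fbinv 1 (zsub y) * ((2 + y) / y)).
  { intros y Hy. unfold h. rewrite Fbinv_eq_mul_decr by (apply Rabs_zsub_lt1; lra).
    fold G. unfold zsub. field. lra. }
  assert (HG : forall z, Rabs z < 1 -> ex_derive G z).
  { intros z Hz. eexists. apply is_derive_PSeries, Rabs_lt_CV_radius; [|exact Hz].
    apply (CV_radius_ge1_of_bounded _ 1). intros n. apply Rabs_binv_coef_le. }
  assert (Ehl : forall y, 0 <= y < 1 -> h y = Li1 y).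
  { apply (eq_on_01_of_is_derive _ _ (fun y => - 1 / (1 + y))).
    - intros y Hy. apply (is_derive_ext_loc (fun y => Fbinv 1 (zsub y) * ((2 + y) / y))).
      + apply (locally_interval _ y 0 1); try (simpl; lra).
        intros t Ht0 Ht1. symmetry. apply Hh. simpl in *. lra.
      + now apply is_derive_Fbinv1_zsub_div.
    - intros y Hy. apply is_derive_Li1. apply Rabs_def1; lra.
    - apply continuity_pt_of_ex_derive. unfold h.
      apply (ex_derive_mult (fun y => - (y * (2 + y)) / (1 + y)) (fun y => G (zsub y))).
      + auto_derive. lra.
      + apply (ex_derive_comp G zsub); [apply HG, Rabs_zsub_lt1; lra|].
        eexists. apply is_derive_zsub. lra.
    - apply continuity_pt_of_ex_derive. eexists. apply is_derive_Li1. rewrite Rabs_R0. lra.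
    - unfold h, Li1. rewrite Li_0 by discriminate. unfold Rdiv. ring. }
  intros Hx. rewrite <- Ehl by lra. rewrite Hh by lra. field. lra.
Qed.

(** * Higher weight *)

Definition Li_comb (T : list (Q * list (nat * R))) (x : R) : R :=
  fold_right (fun t acc => Q2R (fst t) * Li (snd t) x + acc) 0 T.

Definition Lval_comb (T : list (Q * list (nat * R))) : R :=
  fold_right (fun t acc => Q2R (fst t) * Series (Li_coef (snd t)) + acc) 0 T.

(* As [Li_(incr_head w)' = Li_w / x] and [Li_((1,-1) :: neg_head w)' = - Li_w / (1 + x)],
   a step multiplies the derivative by [2 / x - 1 / (1 + x)], as in [is_derive_Fbinv_zsub]. *)
Definition expansion_step (t : Q * list (nat * R)) : list (Q * list (nat * R)) :=
  ((2 * fst t)%Q, incr_head (snd t)) :: (fst t, (1%nat, -1) :: neg_head (snd t)) :: nil.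

Fixpoint expansion (k : nat) : list (Q * list (nat * R)) :=
  match k with
  | O => ((-1)%Q, (1%nat, -1) :: (1%nat, 1) :: nil) :: nil
  | S k => flat_map expansion_step (expansion k)
  end.

Lemma cmzv2_index_incr_head W w : cmzv2_index W w -> cmzv2_index (S W) (incr_head w).
Proof.
  intros (Hnil & Hw & HW & _). destruct w as [|[s a] v]; [congruence|].
  inversion Hw as [|? ? [Hs Ha] Hv]; subst. simpl in *.
  split; [discriminate|]. split; [|split; [simpl; lia | intros [E _]; lia]].
  constructor; [split; simpl; [lia | exact Ha] | exact Hv].
Qed.

Lemma cmzv2_index_alternating W w :
  cmzv2_index W w -> cmzv2_index (S W) ((1%nat, -1) :: neg_head w).
Proof.
  intros (_ & Hw & HW & _). split; [discriminate|]. split; [|split].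
  - constructor; [split; simpl; [lia | ring] | now apply Forall_letter_neg_head].
  - destruct w as [|[s a] v]; simpl in *; lia.
  - intros [_ E]. lra.
Qed.

Lemma cmzv2_index_expansion k : List.Forall (fun t => cmzv2_index (S (S k)) (snd t)) (expansion k).
Proof.
  induction k as [|k IH]; simpl.
  - constructor; [|constructor]. split; [discriminate|].
    split; [|split; [reflexivity | intros [_ E]; lra]].
    repeat constructor; simpl; ring.
  - induction (expansion k) as [|t T IHT]; [constructor|].
    inversion IH as [|? ? Ht HT]; subst. simpl.
    constructor; [now apply cmzv2_index_incr_head|].
    constructor; [now apply cmzv2_index_alternating | now apply IHT].
Qed.

Lemma cmzv2_index_Li1 : cmzv2_index 1 ((1%nat, -1) :: nil).
Proof.
  split; [discriminate|]. split; [|split; [reflexivity | intros [_ E]; lra]].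
  repeat constructor; simpl; ring.
Qed.

Lemma is_derive_Li_comb_step T x : 0 < x < 1 ->
  List.Forall (fun t => List.Forall is_letter (snd t) /\ snd t <> nil) T ->
  is_derive (Li_comb (flat_map expansion_step T)) x ((2 + x) / (x * (1 + x)) * Li_comb T x).
Proof.
  intros Hx HT. assert (Hx1 : Rabs x < 1) by (apply Rabs_def1; lra).
  induction T as [|[q w] T IH].
  - eapply is_derive_eq; [apply (is_derive_ext (fun _ => 0)); [reflexivity | apply is_derive_const]|].
    simpl. change zero with 0. ring.
  - inversion HT as [|? ? [Hw Hnil] HT']; subst. simpl in Hw, Hnil.
    destruct w as [|[s a] v]; [congruence|].
    eapply is_derive_eq.
    + apply (is_derive_plus (fun y => Q2R (2 * q) * Li ((S s, a) :: v) y)).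
      { apply is_derive_scal, is_derive_Li_incr_head; auto; lra. }
      apply (is_derive_plus (fun y => Q2R q * Li ((1%nat, -1) :: neg_head ((s, a) :: v)) y)).
      { apply is_derive_scal, is_derive_Li_alternating; [|exact Hx1].
        now apply Forall_letter_neg_head. }
      exact (IH HT').
    + rewrite neg_head_involutive, Q2R_mult. change plus with Rplus. simpl.
      unfold Q2R at 1. simpl. field. lra.
Qed.

Lemma ex_derive_Li_comb T x :
  List.Forall (fun t => List.Forall is_letter (snd t)) T -> Rabs x < 1 ->
  ex_derive (Li_comb T) x.
Proof.
  intros HT Hx. induction T as [|[q w] T IH]; [apply ex_derive_const|].
  inversion HT as [|? ? Hw HT']; subst.
  apply (ex_derive_plus (fun y => Q2R q * Li w y) (Li_comb T)); [|now apply IH].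
  apply ex_derive_scal. eexists. now apply is_derive_PSeries, Rabs_lt_CV_radius_Li_coef.
Qed.

Lemma Li_comb_0 T : List.Forall (fun t => snd t <> nil) T -> Li_comb T 0 = 0.
Proof.
  induction T as [|[q w] T IH]; intros HT; [reflexivity|].
  inversion HT; subst. simpl. rewrite Li_0, IH by auto. ring.
Qed.

Lemma Fbinv_zsub_0 s : Fbinv s (zsub 0) = 0.
Proof.
  replace (zsub 0) with 0 by (unfold zsub; field). unfold Fbinv. now rewrite PSeries_0.
Qed.

Lemma is_derive_Li_comb_expansion_0 x : 0 < x < 1 ->
  is_derive (Li_comb (expansion 0)) x (Li1 x / (1 + x)).
Proof.
  intros Hx. eapply is_derive_eq.
  - apply (is_derive_plus (fun y => Q2R (-1) * Li ((1%nat, -1) :: (1%nat, 1) :: nil) y)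
                          (fun _ => 0)).
    + apply is_derive_scal, is_derive_Li_alternating; [repeat constructor; simpl; ring|].
      apply Rabs_def1; lra.
    + apply is_derive_const.
  - unfold Li1. simpl neg_head. replace (- (1)) with (-1) by ring.
    unfold Q2R. simpl. change plus with Rplus. change zero with 0. field. lra.
Qed.

Lemma Fbinv_zsub_expansion k x : 0 <= x < 1 -> Fbinv (S (S k)) (zsub x) = Li_comb (expansion k) x.
Proof.
  assert (Hw : forall j, List.Forall (fun t => List.Forall is_letter (snd t) /\ snd t <> nil)
                                     (expansion j)).
  { intros j. eapply List.Forall_impl; [|apply cmzv2_index_expansion]. intros t (Hnil & Hl & _). auto. }
  assert (Hcont : forall j, continuity_pt (Li_comb (expansion j)) 0).
  { intros j. apply continuity_pt_of_ex_derive, ex_derive_Li_comb; [|rewrite Rabs_R0; lra].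
    eapply List.Forall_impl; [|apply Hw]. intros t [Ht _]. exact Ht. }
  assert (H0 : forall j, Fbinv (S (S j)) (zsub 0) = Li_comb (expansion j) 0).
  { intros j. rewrite Fbinv_zsub_0, Li_comb_0; [reflexivity|].
    eapply List.Forall_impl; [|apply Hw]. intros t [_ Ht]. exact Ht. }
  assert (Hf : forall s, continuity_pt (fun y => Fbinv s (zsub y)) 0)
    by (intros s; apply continuity_pt_of_ex_derive, ex_derive_Fbinv_zsub; lra).
  revert x. induction k as [|k IH].
  - apply eq_on_01_of_is_derive with
      (df := fun x => (2 + x) / (x * (1 + x)) * Fbinv 1 (zsub x)); auto.
    + intros x Hx. apply is_derive_Fbinv_zsub. lra.
    + intros x Hx. eapply is_derive_eq; [now apply is_derive_Li_comb_expansion_0|].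
      rewrite Fbinv1_zsub by exact Hx. field. lra.
  - apply eq_on_01_of_is_derive with
      (df := fun x => (2 + x) / (x * (1 + x)) * Fbinv (S (S k)) (zsub x)); auto.
    + intros x Hx. apply is_derive_Fbinv_zsub. lra.
    + intros x Hx. rewrite IH by lra. now apply is_derive_Li_comb_step.
Qed.

(** * Values at [x = 1] *)

Lemma left_lim1_Li W w : cmzv2_index W w -> left_lim1 (Li w) (Series (Li_coef w)).
Proof.
  intros Hw. apply left_lim1_PSeries; [apply CV_radius_Li_coef, Hw | exact (ex_series_Li_coef W w Hw)].
Qed.

Lemma left_lim1_Li_comb W T : List.Forall (fun t => cmzv2_index W (snd t)) T ->
  left_lim1 (Li_comb T) (Lval_comb T).
Proof.
  induction T as [|t T IH]; intros HT; [apply left_lim1_const|].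
  inversion HT as [|? ? Ht HT']; subst.
  apply left_lim1_plus; [|now apply IH].
  apply left_lim1_mult; [apply left_lim1_const | exact (left_lim1_Li W _ Ht)].
Qed.

Lemma in_CMZV2_Lval_comb W T :
  List.Forall (fun t => cmzv2_index W (snd t)) T -> in_CMZV2 W (Lval_comb T).
Proof.
  intros HT. exists (map (fun t => (fst t, snd t, Series (Li_coef (snd t)))) T). split.
  - apply List.Forall_map. eapply List.Forall_impl; [|exact HT].
    intros t Ht. split; [exact Ht | exact (is_lim_seq_msum W _ Ht)].
  - clear HT. induction T as [|t T IH]; [reflexivity|]. simpl. now rewrite <- IH.
Qed.

Lemma left_lim1_Fbinv_zsub s : left_lim1 (fun x => Fbinv s (zsub x)) (Fbinv s (-1 / 2)).
Proof.
  replace (-1 / 2) with (zsub 1) by (unfold zsub; field).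
  apply left_lim1_continuous, continuity_pt_of_ex_derive, ex_derive_Fbinv_zsub. lra.
Qed.

Lemma thm_term_S s m : thm_term s (S m) = binv_coef s (S m) * (-1 / 2) ^ S m.
Proof.
  unfold thm_term, binv_coef.
  replace (-1 / 2) with (-1 * / 2) by field. rewrite Rpow_mult_distr, pow_inv.
  pose proof (INR_fact_neq_0 (S m)). pose proof (INR_fact_neq_0 (2 * S m)).
  assert (INR (S m) ^ s <> 0) by (apply pow_nonzero, not_0_INR; lia).
  assert (2 ^ S m <> 0) by (apply pow_nonzero; lra).
  field. repeat split; auto.
Qed.

Lemma is_series_thm_term s : is_series (fun k => thm_term s (S k)) (Fbinv s (-1 / 2)).
Proof.
  assert (Hx : Rabs (-1 / 2) < 1) by (rewrite Rabs_left; lra).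
  assert (Hs := PSeries_correct _ _ (ex_pseries_binv_coef s _ Hx)).
  apply is_pseries_R in Hs. change (PSeries (binv_coef s) (-1 / 2)) with (Fbinv s (-1 / 2)) in Hs.
  assert (E : Fbinv s (-1 / 2) + (fun n => binv_coef s n * (-1 / 2) ^ n) O = Fbinv s (-1 / 2))
    by (simpl; ring).
  rewrite <- E in Hs.
  apply (is_series_incr_1 (V := R_NormedModule) (fun n => binv_coef s n * (-1 / 2) ^ n)) in Hs.
  eapply is_series_ext; [|exact Hs]. intros n. symmetry. apply thm_term_S.
Qed.

Lemma Fbinv1_half : Fbinv 1 (-1 / 2) = Lval_comb (((1 # 3)%Q, (1%nat, -1) :: nil) :: nil).
Proof.
  apply (left_lim1_unique (fun x => Fbinv 1 (zsub x))); [apply left_lim1_Fbinv_zsub|].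
  apply (left_lim1_ext (fun x => Li1 x * (x / (2 + x)))).
  { intros x Hx. rewrite Fbinv1_zsub by exact Hx. field. lra. }
  replace (Lval_comb _) with (Series (Li_coef ((1%nat, -1) :: nil)) * (1 / (2 + 1)))
    by (unfold Lval_comb, Q2R; simpl; field).
  apply left_lim1_mult; [exact (left_lim1_Li 1 _ cmzv2_index_Li1)|].
  apply (left_lim1_continuous (fun x => x / (2 + x))), continuity_pt_of_ex_derive.
  auto_derive. lra.
Qed.

Lemma Fbinv_half_expansion k : Fbinv (S (S k)) (-1 / 2) = Lval_comb (expansion k).
Proof.
  apply (left_lim1_unique (fun x => Fbinv (S (S k)) (zsub x))); [apply left_lim1_Fbinv_zsub|].
  apply (left_lim1_ext (Li_comb (expansion k))).
  { intros x Hx. symmetry. apply Fbinv_zsub_expansion. lra. }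
  apply (left_lim1_Li_comb (S (S k))), cmzv2_index_expansion.
Qed.

Theorem theorem4p18 (s : nat) (hs : (1 <= s)%nat) :
  exists x : R, is_series (fun k : nat => thm_term s (S k)) x /\ in_CMZV2 s x.
Proof.
  exists (Fbinv s (-1 / 2)). split; [apply is_series_thm_term|].
  destruct s as [|[|k]]; [lia | rewrite Fbinv1_half | rewrite Fbinv_half_expansion];
    apply in_CMZV2_Lval_comb.
  - constructor; [apply cmzv2_index_Li1 | constructor].
  - apply cmzv2_index_expansion.
Qed.
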